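(* Let $N:\mathbb{R}\to[0,1]$ be a monotone nondecreasing cumulative distribution function whose density has bounded support $[A,B]$. Then for every $\epsilon>0$ there exist support bounds $A^*<B^*$ and parameters $\theta$ of a PNN such that $$\sup_{x\in[A,B]}\bigl|N_\theta(x)-N(x)\bigr|<\epsilon,$$ where $N_\theta$ is the normalized PNN cdf with support bounds $[A^*,B^*]$.
   Context: Let $\sigma(t)=1/(1+e^{-t})$. A PNN (probabilistically normalized network) of depth $L\ge 2$ on inputs $z\in\mathbb{R}$ is the function $F_\theta$ defined by $a_0=z$, $a_\ell=\sigma(W_\ell^{T}a_{\ell-1}+c_\ell)$ for $\ell=1,\dots,L-1$ (entrywise sigmoid), and $F_\theta(z)=\beta^{T}a_{L-1}$, where every weight matrix $W_\ell$ has strictly positive entries, the biases $c_\ell$ are arbitrary real vectors, and $\beta$ is a probability vector with strictly positive entries (widths arbitrary); $\theta$ denotes all these parameters. Given support bounds $A^*<B^*$, the normalized PNN cdf is $N_\theta(x)=\frac{F_\theta(x)-F_\theta(A^* )}{F_\theta(B^* )-F_\theta(A^* )}$. *)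

From HB Require Import structures.
From mathcomp Require Import all_boot all_order all_algebra.
From mathcomp Require Import all_classical all_reals all_analysis.
Unset Strict Implicit. Unset Printing Implicit Defensive.
Import Order.TTheory GRing.Theory Num.Theory.
Local Open Scope ring_scope.

Definition sigmoid {R : realType} (t : R) : R := (1 + expR (- t))^-1.

(* pnn_layers k n a : a : R -> 'cV_n is the activation a_k of the k-th layer
   of a network with input a_0 = z (width 1) and hidden layers
   a_l = sigma(W_l^T a_{l-1} + c_l), every W_l with strictly positive entries,
   c_l arbitrary. *)
Inductive pnn_layers (R : realType) : nat -> forall n : nat, (R -> 'cV[R]_n) -> Prop :=
| pnn_input : pnn_layers R 0 1 (fun z => const_mx z)
| pnn_layer (k n m : nat) (a : R -> 'cV[R]_n) (W : 'M[R]_(n, m)) (c : 'cV[R]_m) :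
    pnn_layers R k n a ->
    (forall i j, 0 < W i j) ->
    pnn_layers R k.+1 m (fun z => map_mx sigmoid (W^T *m a z + c)).

Definition is_PNN {R : realType} (F : R -> R) : Prop :=
  exists (L n : nat) (a : R -> 'cV[R]_n) (beta : 'cV[R]_n),
    (2 <= L)%N /\ pnn_layers R L.-1 n a /\
    (forall i, 0 < beta i ord0) /\ \sum_i beta i ord0 = 1 /\
    (forall z, F z = (beta^T *m a z) ord0 ord0).

Definition normalized_cdf {R : realType} (F : R -> R) (As Bs x : R) : R :=
  (F x - F As) / (F Bs - F As).

(* The cdf N is continuous, so by the intermediate value theorem it attains
   every level j/K at some point s_j.  A width-K, depth-2 PNN that averages K
   steep sigmoids, the k-th centred between s_k and s_(k+1), is within d of
   the staircase j/K at every s_j; as both it and N are nondecreasing, it is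
   within 2/K + d of N everywhere.  Normalizing on [s_0, s_K] moves it by at
   most 2d more, and K, d are chosen so that 2/K + 3d < eps. *)

From HB Require Import structures.
From mathcomp Require Import all_boot all_order all_algebra.
From mathcomp Require Import all_classical all_reals all_analysis measurable_realfun.
From mathcomp Require Import ring lra.
Import Order.TTheory GRing.Theory Num.Theory.
Local Open Scope ring_scope.

Section Sigmoid.
Context {R : realType}.
Implicit Types d u v : R.

Lemma sigmoid_gt0 u : 0 < sigmoid u.
Proof. by rewrite /sigmoid invr_gt0 addr_gt0 // expR_gt0. Qed.

Lemma sigmoid_lt1 u : sigmoid u < 1.
Proof. by rewrite /sigmoid invf_lt1 ?addr_gt0 ?expR_gt0 // ltrDl expR_gt0. Qed.

Lemma sigmoid_homo : {homo @sigmoid R : u v / u <= v}.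
Proof.
move=> u v uv; rewrite /sigmoid lef_pV2 ?posrE ?addr_gt0 ?expR_gt0 //.
by rewrite lerD2l ler_expR lerN2.
Qed.

Lemma sigmoid_right_tail d u : 0 < d -> - ln d <= u -> 1 - d <= sigmoid u.
Proof.
move=> d_gt0 du.
have e_le : expR (- u) <= d by rewrite -[leRHS]lnK ?posrE // ler_expR lerNl.
have e_gt0 := expR_gt0 (- u).
rewrite /sigmoid -div1r ler_pdivlMr ?addr_gt0 //; nra.
Qed.

Lemma sigmoid_left_tail d u : 0 < d -> u <= ln d -> sigmoid u <= d.
Proof.
move=> d_gt0 du.
have e_ge : d^-1 <= expR (- u).
  by rewrite -[X in X^-1 <= _]lnK ?posrE // -expRN ler_expR lerN2.
have e_gt0 := expR_gt0 (- u).
rewrite /sigmoid -div1r ler_pdivrMr ?addr_gt0 //.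
have : d * d^-1 <= d * expR (- u) by rewrite ler_pM2l.
rewrite divff ?gt_eqF //; nra.
Qed.

End Sigmoid.

Definition density_cdf {R : realType} (f : R -> R) (x : R) : R :=
  fine (\int[lebesgue_measure]_(t in `]-oo, x]%classic) (f t)%:E)%E.

Section DensityCdf.
Context {R : realType} {f : R -> R} {A B : R}.
Hypotheses (AB : A <= B) (f_meas : measurable_fun setT f)
  (f_ge0 : forall t, 0 <= f t) (f_out : forall t, t < A \/ B < t -> f t = 0)
  (f_int1 : (\int[lebesgue_measure]_(t in setT) (f t)%:E = 1)%E).

Lemma density_integrable : lebesgue_measure.-integrable setT (EFin \o f).
Proof.
apply/integrableP; split; first exact/measurable_EFinP.
under eq_integral do rewrite /= ger0_norm //.
by rewrite f_int1 ltry.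
Qed.

Lemma density_cdf_parameterized a x : a <= A -> a <= x ->
  density_cdf f x = parameterized_integral lebesgue_measure a x f.
Proof.
move=> aA ax; rewrite /density_cdf /parameterized_integral /Rintegral; congr fine.
rewrite [LHS]integral_mkcond [RHS]integral_mkcond; apply: eq_integral => t _.
rewrite /patch; have [ta|a_le_t] := ltP t a.
  by rewrite f_out; [case: ifP; case: ifP | left; exact: lt_le_trans ta aA].
by rewrite !mem_setE !in_itv /= a_le_t.
Qed.

Lemma density_cdf_lt x : x < A -> density_cdf f x = 0.
Proof.
move=> xA; rewrite /density_cdf integral0_eq //= => t; rewrite in_itv /= => tx.
by rewrite f_out //; left; exact: le_lt_trans tx xA.
Qed.

Lemma density_cdf_ge x : B <= x -> density_cdf f x = 1.
Proof.
move=> Bx; rewrite /density_cdf integral_mkcond.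
rewrite (_ : _ \_ _ = (fun t => (f t)%:E)) ?f_int1 //.
apply/funext => t; rewrite /patch; case: ifP => // /negbT.
rewrite mem_setE in_itv /= -ltNge => xt.
by rewrite f_out //; right; exact: le_lt_trans Bx xt.
Qed.

Lemma density_cdf_surjective v : 0 <= v <= 1 -> exists c, density_cdf f c = v.
Proof.
move=> v01; pose a := A - 1.
have aA : a < A by rewrite /a ltrBlDr ltrDl.
have aB : a <= B := ltW (lt_le_trans aA AB).
have f_int_aB : lebesgue_measure.-integrable `[a, B] (EFin \o f).
  exact: integrableS density_integrable.
have [|c cab Pc] := IVT (v := v) aB (parameterized_integral_continuous aB f_int_aB).
  rewrite -(density_cdf_parameterized a a (ltW aA) (lexx a)).
  rewrite -(density_cdf_parameterized a B (ltW aA) aB).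
  by rewrite density_cdf_lt // density_cdf_ge // minEle maxEle ler01.
exists c; move: cab; rewrite in_itv /= => /andP[ac _].
by rewrite (density_cdf_parameterized a c (ltW aA) ac).
Qed.

Lemma density_cdf_levels K : (0 < K)%N ->
  {s : nat -> R & forall j, (j <= K)%N -> density_cdf f (s j) = j%:R / K%:R}.
Proof.
move=> K_gt0.
apply: (choice (P := fun j c => (j <= K)%N -> density_cdf f c = j%:R / K%:R)) => j.
have [jK|_] := leqP j K; last by exists 0.
have [|c fc] := density_cdf_surjective (j%:R / K%:R); last by exists c.
by rewrite divr_ge0 //= ler_pdivrMr ?ltr0n // mul1r ler_nat.
Qed.

End DensityCdf.

Lemma is_PNN_one_hidden_layer {R : realType} (n : nat) (w c beta : 'I_n -> R) :
  (forall i, 0 < w i) -> (forall i, 0 < beta i) -> \sum_i beta i = 1 ->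
  is_PNN (fun z => \sum_i beta i * sigmoid (w i * z + c i)).
Proof.
move=> w_gt0 beta_gt0 beta_sum1.
pose W : 'M[R]_(1, n) := \matrix_(i, j) w j.
exists 2%N, n, (fun z => map_mx sigmoid (W^T *m const_mx z + \col_j c j)).
exists (\col_j beta j); split; first by [].
split; first by apply: pnn_layer (pnn_input R) _ => i j; rewrite mxE.
split; first by move=> i; rewrite mxE.
split; first by rewrite -beta_sum1; apply: eq_bigr => i _; rewrite mxE.
move=> z; rewrite mxE; apply: eq_bigr => j _.
by rewrite !mxE big_ord1 !mxE.
Qed.

Lemma monotone_grid_approx {R : realType} (N G : R -> R) (K : nat)
    (s : nat -> R) (d : R) :
  (0 < K)%N -> {homo N : x y / x <= y} -> {homo G : x y / x <= y} ->
  (forall x, 0 <= G x <= 1) ->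
  (forall j, (j <= K)%N -> N (s j) = j%:R / K%:R) ->
  (forall j, (j <= K)%N -> `|G (s j) - j%:R / K%:R| <= d) ->
  forall x, 0 <= N x <= 1 -> `|G x - N x| <= 2 / K%:R + d.
Proof.
move=> K_gt0 N_homo G_homo G01 N_s G_s x /andP[y_ge0 y_le1]; set y := N x.
have N_lt u v : N u < N v -> u < v.
  by move=> h; rewrite ltNge; apply/negP => /N_homo; rewrite leNgt h.
have Kpos : 0 < K%:R :> R by rewrite ltr0n.
have invK_ge0 : 0 <= K%:R^-1 :> R by rewrite invr_ge0 ler0n.
have /andP[G_ge0 G_le1] := G01 x.
have d_ge0 : 0 <= d := le_trans (normr_ge0 _) (G_s 0%N (leq0n K)).
pose j := Num.truncn (y * K%:R).
have /andP[jy yj] : j%:R / K%:R <= y < j.+1%:R / K%:R.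
  rewrite ler_pdivrMr // ltr_pdivlMr //; exact/truncn_itv/mulr_ge0/ltW.
have jK : (j <= K)%N.
  rewrite -(ler_nat R); move: jy; rewrite ler_pdivrMr // => jy.
  by apply: le_trans jy _; rewrite ler_piMl.
have G_up : G x <= y + 1 / K%:R + d.
  have [jK'|] := ltnP j K; last first.
    by move=> Kj; move: jy; rewrite (@anti_leq j K) ?jK ?Kj // divff ?gt_eqF //; lra.
  have xs : x < s j.+1 by apply: N_lt; rewrite N_s.
  have := G_homo _ _ (ltW xs); move: (G_s _ jK') yj.
  rewrite ler_norml -natr1 mulrDl; lra.
have G_lo : y - 2 / K%:R - d <= G x.
  move: jy yj jK; case: j => [|i] jy yj jK; first lra.
  have xs : s i < x.
    apply: N_lt; rewrite N_s ?(ltnW jK) //; apply: lt_le_trans jy.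
    by rewrite ltr_pM2r ?invr_gt0 // ltr_nat.
  have := G_homo _ _ (ltW xs); move: (G_s _ (ltnW jK)) yj.
  rewrite ler_norml -!natr1 -addrA mulrDl; lra.
rewrite ler_norml; apply/andP; split; lra.
Qed.

Lemma levels_increasing {R : realType} {N : R -> R} {K : nat} {s : nat -> R} :
  {homo N : x y / x <= y} -> (forall j, (j <= K)%N -> N (s j) = j%:R / K%:R) ->
  forall i j, (i < j)%N -> (j <= K)%N -> s i < s j.
Proof.
move=> N_homo N_s i j ij jK; have iK : (i < K)%N := leq_trans ij jK.
rewrite ltNge; apply/negP => /N_homo; rewrite !N_s ?(ltnW iK) //.
by rewrite ler_pM2r ?invr_gt0 ?ltr0n ?(leq_ltn_trans (leq0n i) iK) // ler_nat leqNgt ij.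
Qed.

Lemma normalized_error {R : realType} (g0 g1 gx n e d : R) :
  0 <= g0 <= d -> 1 - d <= g1 <= 1 -> 0 <= gx <= 1 -> d <= 1/4 ->
  `|gx - n| <= e -> `|(gx - g0) / (g1 - g0) - n| <= e + 2 * d.
Proof.
move=> /andP[g0_ge0 g0_le] /andP[g1_ge g1_le1] /andP[gx_ge0 gx_le1] d_le.
have width : 1/2 <= g1 - g0 by lra.
set q := (gx - g0) / (g1 - g0).
have hq : q * (g1 - g0) = gx - g0 by rewrite /q mulfVK // gt_eqF //; lra.
have : `|q - gx| <= 2 * d by rewrite ler_norml; apply/andP; split; nra.
rewrite !ler_norml => /andP[? ?] /andP[? ?]; apply/andP; split; lra.
Qed.

Section Staircase.
Context {R : realType}.
Variables (K : nat) (s : nat -> R) (d : R).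
Hypotheses (K_gt0 : (0 < K)%N) (d_gt0 : 0 < d) (d_le : d <= 1/4)
  (s_incr : forall i j, (i < j)%N -> (j <= K)%N -> s i < s j).

(* Chosen so that the k-th sigmoid is within d of 0 at s_k and of 1 at
   s_(k+1), see step_slope_half_gap. *)
Definition step_slope k := 2 * - ln d / (s k.+1 - s k).
Definition step_center k := (s k + s k.+1) / 2.

Definition staircase (z : R) : R :=
  \sum_(0 <= k < K) K%:R^-1 * sigmoid (step_slope k * (z - step_center k)).

Let Kpos : 0 < K%:R :> R. Proof. by rewrite ltr0n. Qed.

Let s_le i j : (i <= j)%N -> (j <= K)%N -> s i <= s j.
Proof. by rewrite leq_eqVlt => /orP[/eqP -> //|ij] jK; exact/ltW/s_incr. Qed.

Let gap_gt0 k : (k < K)%N -> 0 < s k.+1 - s k.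
Proof. by move=> kK; rewrite subr_gt0 s_incr. Qed.

Lemma step_slope_gt0 k : (k < K)%N -> 0 < step_slope k.
Proof.
move=> kK; rewrite /step_slope divr_gt0 ?gap_gt0 // mulr_gt0 // oppr_gt0.
rewrite ln_lt0 // d_gt0 /=; apply: le_lt_trans d_le _; lra.
Qed.

Lemma step_slope_half_gap k : (k < K)%N ->
  step_slope k * ((s k.+1 - s k) / 2) = - ln d.
Proof. by move=> kK; rewrite /step_slope; field; rewrite gt_eqF ?gap_gt0. Qed.

Lemma step_after k j : (k < j)%N -> (j <= K)%N ->
  1 - d <= sigmoid (step_slope k * (s j - step_center k)).
Proof.
move=> kj jK; have kK := leq_trans kj jK.
apply: sigmoid_right_tail => //; rewrite -(step_slope_half_gap _ kK).
rewrite ler_pM2l ?step_slope_gt0 //; have := s_le _ _ kj jK; rewrite /step_center; lra.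
Qed.

Lemma step_before k j : (j <= k)%N -> (k < K)%N ->
  sigmoid (step_slope k * (s j - step_center k)) <= d.
Proof.
move=> jk kK; apply: sigmoid_left_tail => //.
rewrite -[ln d]opprK -(step_slope_half_gap _ kK).
rewrite -[leRHS]mulrN ler_pM2l ?step_slope_gt0 //.
have := s_le _ _ jk (ltnW kK); rewrite /step_center; lra.
Qed.

Lemma staircase_homo : {homo staircase : x y / x <= y}.
Proof.
move=> x y xy; apply: ler_sum_nat => k /andP[_ kK] /=.
rewrite ler_pM2l ?invr_gt0 //; apply: sigmoid_homo.
by rewrite ler_pM2l ?step_slope_gt0 // lerB.
Qed.

Lemma staircase_ge0 z : 0 <= staircase z.
Proof. by apply: sumr_ge0 => k _; rewrite mulr_ge0 ?invr_ge0 ?ltW ?sigmoid_gt0. Qed.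

Lemma staircase_le_frac i j z : (i <= j)%N ->
  \sum_(i <= k < j) K%:R^-1 * sigmoid (step_slope k * (z - step_center k))
    <= (j - i)%:R / K%:R.
Proof.
move=> ij; apply: le_trans (ler_sum_nat (G := fun=> K%:R^-1) _) _.
  by move=> k _ /=; rewrite ler_piMr ?invr_ge0 ?ler0n ?ltW ?sigmoid_lt1.
by rewrite sumr_const_nat mulr_natl.
Qed.

Lemma staircase_le1 z : staircase z <= 1.
Proof. by apply: le_trans (staircase_le_frac _ _ z (leq0n K)) _; rewrite subn0 divff ?gt_eqF. Qed.

Lemma staircase_grid j : (j <= K)%N -> `|staircase (s j) - j%:R / K%:R| <= d.
Proof.
move=> jK; rewrite /staircase (big_cat_nat (leq0n j) jK) /=.
set lo := \sum_(0 <= k < j) _; set hi := \sum_(j <= k < K) _.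
have lo_ge : j%:R / K%:R * (1 - d) <= lo.
  apply: le_trans (ler_sum_nat (F := fun=> K%:R^-1 * (1 - d)) _).
    by rewrite sumr_const_nat subn0 -[leRHS]mulr_natl mulrA.
  by move=> k /andP[_ kj] /=; rewrite ler_pM2l ?invr_gt0 // step_after.
have lo_le : lo <= j%:R / K%:R by have := staircase_le_frac _ _ (s j) (leq0n j); rewrite subn0.
have hi_ge0 : 0 <= hi.
  by apply: sumr_ge0 => k _; rewrite mulr_ge0 ?invr_ge0 ?ltW ?sigmoid_gt0.
have hi_le : hi <= d.
  apply: le_trans (ler_sum_nat (G := fun=> K%:R^-1 * d) _) _.
    by move=> k /andP[jk kK] /=; rewrite ler_pM2l ?invr_gt0 // step_before.
  rewrite sumr_const_nat -[leLHS]mulr_natl mulrA.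
  apply: le_trans (_ : K%:R * K%:R^-1 * d <= d); last by rewrite divff ?gt_eqF ?mul1r.
  by rewrite ler_pM2r // ler_pM2r ?invr_gt0 // ler_nat leq_subr.
have jK_le1 : j%:R / K%:R <= 1 :> R by rewrite ler_pdivrMr // mul1r ler_nat.
have jK_ge0 : 0 <= j%:R / K%:R :> R by rewrite divr_ge0.
rewrite ler_norml; apply/andP; split; nra.
Qed.

Lemma staircase_is_PNN : is_PNN staircase.
Proof.
have -> : staircase = fun z => \sum_(k < K) K%:R^-1 *
    sigmoid (step_slope k * z + - (step_slope k * step_center k)).
  by apply/funext => z; rewrite /staircase big_mkord; under eq_bigr do rewrite mulrBr.
apply: is_PNN_one_hidden_layer => [k|k|]; first exact: step_slope_gt0.
  by rewrite invr_gt0.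
by rewrite sumr_const card_ord -[LHS]mulr_natl mulfV ?gt_eqF.
Qed.

Lemma staircase_normalized_error (N : R -> R) x :
  {homo N : x y / x <= y} -> (forall j, (j <= K)%N -> N (s j) = j%:R / K%:R) ->
  0 <= N x <= 1 ->
  `|normalized_cdf staircase (s 0%N) (s K) x - N x| <= 2 / K%:R + 3 * d.
Proof.
move=> N_homo N_s Nx01.
have G01 z : 0 <= staircase z <= 1 by rewrite staircase_ge0 staircase_le1.
have G_s0 : staircase (s 0%N) <= d.
  by have := staircase_grid _ (leq0n K); rewrite mul0r subr0 ger0_norm ?staircase_ge0.
have G_sK : 1 - d <= staircase (s K).
  by have := staircase_grid _ (leqnn K); rewrite divff ?gt_eqF // ler_norml => /andP[? _]; lra.
rewrite (_ : 3 * d = d + 2 * d); last by ring.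
rewrite addrA; apply: normalized_error => //.
- by rewrite staircase_ge0.
- by rewrite staircase_le1 andbT.
- exact: monotone_grid_approx staircase_homo G01 N_s staircase_grid x Nx01.
Qed.

End Staircase.

Theorem lemma5 (R : realType) (N f : R -> R) (A B : R) :
  A < B ->
  (* N maps into [0,1] and is nondecreasing *)
  (forall x, 0 <= N x <= 1) ->
  {homo N : x y / x <= y} ->
  (* f is a probability density with support in [A,B] *)
  measurable_fun setT f ->
  (forall t, 0 <= f t) ->
  (forall t, t < A \/ B < t -> f t = 0) ->
  (\int[lebesgue_measure]_(t in setT) (f t)%:E = 1)%E ->
  (* N is the cdf of the density f *)
  (forall x, N x = fine (\int[lebesgue_measure]_(t in `]-oo, x]%classic) (f t)%:E)) ->
  forall eps : R, 0 < eps ->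
  exists (As Bs : R) (F : R -> R),
    As < Bs /\ is_PNN F /\
    exists d : R, d < eps /\
      (forall x, A <= x <= B -> `|normalized_cdf F As Bs x - N x| <= d).
Proof.
move=> AB N01 N_homo f_meas f_ge0 f_out f_int1 N_cdf eps eps_gt0.
pose K := (Num.truncn (4 / eps)).+1.
have K_gt0 : (0 < K)%N by [].
have K_eps : 2 / K%:R < eps / 2.
  have : 4 / eps < K%:R := truncnS_gt _.
  rewrite ltr_pdivrMr // => ?; rewrite ltr_pdivrMr ?ltr0n // mulrAC ltr_pdivlMr //; lra.
pose d := Num.min (1/4) (eps/8).
have d_gt0 : 0 < d by rewrite lt_min; apply/andP; split; lra.
have d_le : d <= 1/4 by rewrite ge_min lexx.
have d_eps : d <= eps/8 by rewrite ge_min lexx orbT.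
have NE : N = density_cdf f := funext N_cdf; subst N.
have [s N_s] := density_cdf_levels (ltW AB) f_meas f_ge0 f_out f_int1 _ K_gt0.
have s_incr := levels_increasing N_homo N_s.
exists (s 0%N), (s K), (staircase K s d); split; first exact: s_incr.
split; first exact: staircase_is_PNN.
exists (2 / K%:R + 3 * d); split; first lra.
by move=> x _; apply: staircase_normalized_error.
Qed.
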